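(* Let $\mathcal{H}$ be a real Hilbert space, $N\ge2$, $A_1,\dots,A_N:\mathcal{H}\rightrightarrows\mathcal{H}$ maximally monotone, $\theta\in(0,1)$, and $\Gamma\subseteq\mathbb{R}_{++}$ a nonempty closed interval. For $\gamma\in\Gamma$ let $T_\gamma:\mathcal{H}^{N-1}\to\mathcal{H}^{N-1}$ be the Malitsky--Tam operator and, for $\gamma,\delta\in\mathbb{R}_{++}$, let $\tilde{\mathcal{Q}}_{\delta\leftarrow\gamma}$ be the relocator, both defined in the context. Then for any nonempty bounded set $S\subseteq\bigcup_{\gamma\in\Gamma}(\operatorname{Fix}T_\gamma\times\{\gamma\})$ there exists $L\ge0$ with $\|\tilde{\mathcal{Q}}_{\delta\leftarrow\gamma}\mathbf{x}-\tilde{\mathcal{Q}}_{\gamma\leftarrow\gamma}\mathbf{x}\|\le L|\delta-\gamma|$ for all $\delta\in\Gamma$ and all $(\mathbf{x},\gamma)\in S$.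
   Context: $J_A=(\mathrm{Id}+A)^{-1}$. Malitsky--Tam operator: for $\mathbf{x}=(x^1,\dots,x^{N-1})\in\mathcal{H}^{N-1}$, set $z^1=J_{\gamma A_1}x^1$, $z^i=J_{\gamma A_i}(z^{i-1}+x^i-x^{i-1})$ for $i=2,\dots,N-1$, $z^N=J_{\gamma A_N}(z^1+z^{N-1}-x^{N-1})$, and $T_\gamma\mathbf{x}=\mathbf{x}+\theta(z^2-z^1,\dots,z^N-z^{N-1})$. Relocator: $\tilde{\mathcal{Q}}^1_{\delta\leftarrow\gamma}\mathbf{x}=\frac{\delta}{\gamma}x^1+(1-\frac{\delta}{\gamma})J_{\gamma A_1}x^1$ and $\tilde{\mathcal{Q}}^i_{\delta\leftarrow\gamma}\mathbf{x}=\frac{\delta}{\gamma}(x^i-x^1)+\tilde{\mathcal{Q}}^1_{\delta\leftarrow\gamma}\mathbf{x}$ for $i=2,\dots,N-1$; $\tilde{\mathcal{Q}}_{\delta\leftarrow\gamma}=(\tilde{\mathcal{Q}}^1_{\delta\leftarrow\gamma},\dots,\tilde{\mathcal{Q}}^{N-1}_{\delta\leftarrow\gamma})$. $\mathcal{H}^{N-1}$ carries the product Hilbert norm. *)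

From HB Require Import structures.
From mathcomp Require Import all_boot all_order all_algebra.
From mathcomp Require Import all_classical all_reals all_analysis.
From Stdlib Require Import ClassicalEpsilon.
Set Implicit Arguments. Unset Strict Implicit. Unset Printing Implicit Defensive.
Import Order.TTheory GRing.Theory Num.Theory.
Local Open Scope ring_scope.
Local Open Scope classical_set_scope.

Section Hilbert.
Variables (R : realType) (H : lmodType R) (ip : H -> H -> R).

Definition hnorm (x : H) : R := Num.sqrt (ip x x).

Definition isHilbert : Prop :=
  [/\ (forall x y, ip x y = ip y x),
      (forall a x y z, ip (a *: x + y) z = a * ip x z + ip y z),
      (forall x, 0 <= ip x x),
      (forall x, ip x x = 0 -> x = 0) &
      (forall u : nat -> H,
        (forall e : R, 0 < e -> exists M : nat, forall m n : nat,
             (M <= m)%N -> (M <= n)%N -> hnorm (u m - u n) < e) ->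
        exists l : H, forall e : R, 0 < e -> exists M : nat, forall n : nat,
             (M <= n)%N -> hnorm (u n - l) < e)].

(* set-valued operators A : H => H given by their graph: A x u <-> u \in A x *)
Definition monotone_op (A : H -> H -> Prop) : Prop :=
  forall x y u v, A x u -> A y v -> 0 <= ip (x - y) (u - v).

Definition maxmonotone (A : H -> H -> Prop) : Prop :=
  monotone_op A /\
  forall B : H -> H -> Prop, monotone_op B ->
    (forall x u, A x u -> B x u) -> forall x u, B x u -> A x u.

(* resolvent J_{g A} x = (Id + g A)^{-1} x; a point p with x \in p + g A p.
   For A maximally monotone and g > 0 this point exists and is unique
   (Minty), so the choice below is exactly the resolvent. *)
Definition resolvent (g : R) (A : H -> H -> Prop) (x : H) : H :=
  epsilon (inhabits 0) (fun p => exists u, A p u /\ x = p + g *: u).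

Definition pnorm (n : nat) (x : 'I_n -> H) : R :=
  Num.sqrt (\sum_(j < n) ip (x j) (x j)).

Section MT.
Variables (N : nat) (As : nat -> H -> H -> Prop) (theta g : R).

(* A_i = As i for i = 1..N (1-based; other indices unused) *)
Definition J (i : nat) (x : H) : H := resolvent g (As i) x.

(* 1-based access to x = (x^1,...,x^{N-1}) *)
Definition xs (x : 'I_N.-1 -> H) (i : nat) : H :=
  if i is k.+1 then (if insub k is Some j then x j else 0) else 0.

Fixpoint mtz (x : 'I_N.-1 -> H) (i : nat) : H :=
  match i with
  | 0 => 0
  | 1 => J 1 (xs x 1)
  | (k.+1 as i').+1 => J i'.+1 (mtz x i' + xs x i'.+1 - xs x i')
  end.

Definition MTz (x : 'I_N.-1 -> H) (i : nat) : H :=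
  if i == N then J N (mtz x 1 + mtz x N.-1 - xs x N.-1) else mtz x i.

Definition MT_T (x : 'I_N.-1 -> H) : 'I_N.-1 -> H :=
  fun j => x j + theta *: (MTz x (j.+2) - MTz x (j.+1)).

End MT.

Definition reloc (N : nat) (As : nat -> H -> H -> Prop) (d g : R)
    (x : 'I_N.-1 -> H) : 'I_N.-1 -> H :=
  let Q1 := (d / g) *: xs x 1 + (1 - d / g) *: J As g 1 (xs x 1) in
  fun j => if (j : nat) == 0%N then Q1 else (d / g) *: (x j - xs x 1) + Q1.

End Hilbert.

From HB Require Import structures.
From mathcomp Require Import all_boot all_order all_algebra.
From mathcomp Require Import all_classical all_reals all_analysis.
From Stdlib Require Import ClassicalEpsilon.
From mathcomp Require Import ring lra zify.
Set Implicit Arguments. Unset Strict Implicit. Unset Printing Implicit Defensive.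
Import Order.TTheory GRing.Theory Num.Theory numFieldTopology.Exports numFieldNormedType.Exports.
Local Open Scope ring_scope.
Local Open Scope classical_set_scope.

(* For (x, γ) ∈ S the two relocators differ by (δ/γ - 1)(x^i - p) with
   p = J_{γA_1} x^1, so it suffices to bound ‖x^i - p‖/γ on S: the closed set
   Γ ⊆ R_{++} is bounded away from 0, x and γ are bounded on S, and monotonicity
   of A_1 bounds p in terms of x^1, γ and any point (a, u0) of the graph of A_1.
   Since the resolvent is defined by choice, this rests on Minty's theorem. For
   B maximally monotone, (x, u) ↦ sup_{(a,v) ∈ gra B} fitzq a v x u is the
   Fitzpatrick function of B plus (‖x‖² + ‖u‖²)/2; it is strongly convex, so by
   completeness it attains its infimum at some (X, U), and the first-order
   condition there together with maximality of B yields U = -X ∈ B X. *)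

Lemma invSn_lt (R : archiRealFieldType) (e : R) :
  0 < e -> exists M : nat, forall n, (M <= n)%N -> n.+1%:R^-1 < e.
Proof.
move=> e_gt0; pose M := Num.Def.archi_bound e^-1; exists M => n le_Mn.
have inv_lt : e^-1 < M%:R by apply: archi_boundP; rewrite invr_ge0 ltW.
rewrite -[e]invrK ltf_pV2 ?posrE ?invr_gt0 ?ltr0n //.
by apply: lt_le_trans inv_lt _; rewrite ler_nat leqW.
Qed.

Lemma ge0_of_ge_small (R : realFieldType) (K c : R) : 0 <= c ->
  (forall t, 0 < t -> t < 1 -> - (t * c) <= K) -> 0 <= K.
Proof.
move=> c_ge0 hK; case: (leP 0 K) => // K_lt0.
have den_gt0 : 0 < c - K + 1 by lra.
pose t := - K / (c - K + 1).
have t_den : t * (c - K + 1) = - K by rewrite /t divfK // gt_eqF.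
have t_gt0 : 0 < t by rewrite /t divr_gt0 // oppr_gt0.
have t_lt1 : t < 1 by rewrite /t ltr_pdivrMr // mul1r; lra.
have := hK t t_gt0 t_lt1; have : 0 < t * (1 - K) by rewrite mulr_gt0 //; lra.
lra.
Qed.

Lemma sqrtr_le_sqr (R : rcfType) (a M : R) :
  0 <= a -> Num.sqrt a <= M -> a <= M ^+ 2.
Proof.
move=> a_ge0 le_aM; have M_ge0 : 0 <= M := le_trans (sqrtr_ge0 a) le_aM.
by rewrite -(sqr_sqrtr a_ge0) lerXn2r // ?nnegrE ?sqrtr_ge0.
Qed.

Lemma closed_pos_lbound (R : realType) (G : set R) :
  (forall g, G g -> 0 < g) -> closed G ->
  exists2 e : R, 0 < e & forall g, G g -> e <= g.
Proof.
move=> G_gt0 G_closed.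
have : nbhs (0 : R) (~` G).
  apply: open_nbhs_nbhs; split; first exact: closed_openC.
  by move=> /G_gt0; rewrite ltxx.
move=> /nbhs_ballP [e e_gt0 ballG]; exists e => // g Gg.
rewrite leNgt; apply/negP => lt_ge; apply: (ballG g) => //.
by rewrite /ball /= sub0r normrN gtr0_norm ?G_gt0.
Qed.

Section InnerProduct.
Variables (R : realType) (H : lmodType R) (ip : H -> H -> R).
Hypothesis hH : isHilbert ip.

Lemma ipC x y : ip x y = ip y x.
Proof. by case: hH. Qed.

Lemma ip_ge0 x : 0 <= ip x x.
Proof. by case: hH. Qed.

Lemma ip_eq0 x : ip x x = 0 -> x = 0.
Proof. by case: hH => _ _ _ + _; apply. Qed.

Lemma ipDl x y z : ip (x + y) z = ip x z + ip y z.
Proof. by case: hH => _ ipL _ _ _; rewrite -[x in LHS]scale1r ipL mul1r. Qed.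

Lemma ip0l z : ip 0 z = 0.
Proof. by have := ipDl 0 0 z; rewrite addr0; lra. Qed.

Lemma ipZl a x z : ip (a *: x) z = a * ip x z.
Proof. by case: hH => _ ipL _ _ _; rewrite -[a *: x]addr0 ipL ip0l addr0. Qed.

Lemma ipNl x z : ip (- x) z = - ip x z.
Proof. by rewrite -scaleN1r ipZl mulN1r. Qed.

Lemma ipBl x y z : ip (x - y) z = ip x z - ip y z.
Proof. by rewrite ipDl ipNl. Qed.

Lemma ipDr x y z : ip z (x + y) = ip z x + ip z y.
Proof. by rewrite ipC ipDl ipC [ip y z]ipC. Qed.

Lemma ipZr a x z : ip z (a *: x) = a * ip z x.
Proof. by rewrite ipC ipZl ipC. Qed.

Lemma ipNr x z : ip z (- x) = - ip z x.
Proof. by rewrite ipC ipNl ipC. Qed.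

Lemma ipBr x y z : ip z (x - y) = ip z x - ip z y.
Proof. by rewrite ipDr ipNr. Qed.

Lemma ip0r z : ip z 0 = 0.
Proof. by rewrite ipC ip0l. Qed.

Definition ipE := (ipDl, ipDr, ipBl, ipBr, ipNl, ipNr, ipZl, ipZr, ip0l, ip0r).

Lemma ip_addr_le x y : ip (x + y) (x + y) <= 2 * ip x x + 2 * ip y y.
Proof. by have := ip_ge0 (x - y); rewrite !ipE [ip y x]ipC; lra. Qed.

Lemma ip_subr_le x y : ip (x - y) (x - y) <= 2 * ip x x + 2 * ip y y.
Proof. by have := ip_addr_le x (- y); rewrite ipNl ipNr opprK. Qed.

Lemma ipl_small w eps : 0 < eps ->
  exists2 del, 0 < del & forall y, ip y y < del -> ip y w <= eps.
Proof.
move=> eps_gt0; pose W := ip w w + 1.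
have W_gt0 : 0 < W by rewrite /W; have := ip_ge0 w; lra.
exists (eps ^+ 2 / W); first by rewrite divr_gt0 // exprn_gt0.
move=> y y_small; pose t := W / eps.
have t_gt0 : 0 < t by rewrite divr_gt0.
have := ip_ge0 (t *: y - w); rewrite !ipE [ip w y]ipC => sq_ge0.
have ty : t * ip y y <= eps.
  have -> : eps = t * (eps ^+ 2 / W) by rewrite /t; field; lra.
  by rewrite ler_pM2l // ltW.
have tw : ip w w <= t * eps by rewrite /t divfK ?gt_eqF // /W; lra.
have : t * (2 * ip y w) <= t * (2 * eps) by nra.
by rewrite ler_pM2l //; lra.
Qed.

Lemma ip_cauchy_cvg (u : nat -> H) (C : R) :
  (forall k n, ip (u k - u n) (u k - u n) <= C * (k.+1%:R^-1 + n.+1%:R^-1)) ->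
  exists l, forall e, 0 < e -> exists M : nat, forall n, (M <= n)%N ->
    ip (u n - l) (u n - l) < e.
Proof.
move=> u_cauchy; have [_ _ _ _ complete] := hH.
have [l ul] : exists l : H, forall e : R, 0 < e -> exists M : nat,
    forall n : nat, (M <= n)%N -> hnorm ip (u n - l) < e.
  apply: complete => e e_gt0; pose c : R := `|C|.
  have c_ge0 : 0 <= c := normr_ge0 C.
  pose del := e ^+ 2 / (2 * c + 1).
  have del_gt0 : 0 < del by rewrite divr_gt0 ?exprn_gt0 //; lra.
  have del_e : del * (2 * c + 1) = e ^+ 2 by rewrite divfK // gt_eqF //; lra.
  have [M invM] := invSn_lt del_gt0.
  exists M => k n /invM k_small /invM n_small.
  rewrite /hnorm -(gtr0_norm e_gt0) -sqrtr_sqr ltr_sqrt ?exprn_gt0 //.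
  apply: le_lt_trans (u_cauchy k n) _.
  have ikn_ge0 : 0 <= k.+1%:R^-1 + n.+1%:R^-1 :> R by rewrite addr_ge0 ?invr_ge0.
  apply: le_lt_trans (_ : _ <= c * (k.+1%:R^-1 + n.+1%:R^-1)) _.
    by apply: ler_wpM2r => //; rewrite /c ler_norm.
  apply: le_lt_trans (_ : _ <= c * (2 * del)) _.
    rewrite ler_wpM2l //; apply: le_trans (lerD (ltW k_small) (ltW n_small)) _.
    lra.
  by rewrite -del_e; nra.
exists l => e e_gt0; have /ul [M lM] : 0 < Num.sqrt e by rewrite sqrtr_gt0.
by exists M => n /lM; rewrite /hnorm ltr_sqrt.
Qed.

Definition monotonically_related (B : H -> H -> Prop) x u :=
  forall a v, B a v -> 0 <= ip (x - a) (u - v).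

Lemma maxmonotone_related B x u :
  maxmonotone ip B -> monotonically_related B x u -> B x u.
Proof.
case=> B_mono B_max xu_rel.
apply: (B_max (fun p w => B p w \/ (p = x /\ w = u))); last by right.
- move=> p q w z [Bpw|[-> ->]] [Bqz|[-> ->]].
  + exact: B_mono.
  + by have := xu_rel _ _ Bpw; rewrite !ipE; lra.
  + exact: xu_rel.
  + by rewrite !subrr ip0l.
- by move=> ? ? ?; left.
Qed.

Lemma maxmonotone_graph_neq0 B : maxmonotone ip B -> exists a v, B a v.
Proof.
move=> B_max; case: (classic (exists a v, B a v)) => // graph0.
exists 0, 0; apply: maxmonotone_related => // a v Bav.
by case: graph0; exists a, v.
Qed.

Definition fitzq (a v x u : H) : R :=
  ip x v + ip a u - ip a v + (ip x x + ip u u) / 2.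

Lemma fitzq_ge_ip B x u c : maxmonotone ip B ->
  (forall a v, B a v -> fitzq a v x u <= c) ->
  ip x u + (ip x x + ip u u) / 2 <= c.
Proof.
move=> B_max ub; case: (classic (monotonically_related B x u)) => [xu_rel|].
  by have := ub x u (maxmonotone_related B_max xu_rel); rewrite /fitzq; lra.
rewrite /monotonically_related => /existsNP [a] /existsNP [v] /not_implyP [Bav].
move=> /negP; rewrite -ltNge => lt0.
by have := ub _ _ Bav; move: lt0; rewrite /fitzq !ipE; lra.
Qed.

Lemma fitzq_midpoint a v x1 u1 x2 u2 :
  fitzq a v (2^-1 *: (x1 + x2)) (2^-1 *: (u1 + u2)) =
  (fitzq a v x1 u1 + fitzq a v x2 u2) / 2
  - (ip (x1 - x2) (x1 - x2) + ip (u1 - u2) (u1 - u2)) / 8.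
Proof. by rewrite /fitzq !ipE [ip x2 x1]ipC [ip u2 u1]ipC; field. Qed.

Lemma fitzq_shift a v X U x u :
  fitzq a v X U <= fitzq a v x u + ip (X - x) (v + X) + ip (U - u) (a + U).
Proof.
have := ip_ge0 (X - x); have := ip_ge0 (U - u).
by rewrite /fitzq !ipE [ip x X]ipC [ip u U]ipC [ip U a]ipC [ip u a]ipC; lra.
Qed.

Lemma fitzq_segment a v a' v' X U t : 0 <= t -> 0 <= ip (a - a') (v - v') ->
  fitzq a' v' (X + t *: (a - X)) (U + t *: (v - U)) <=
  (1 - t) * fitzq a' v' X U
  + t * (ip a v + ip X (a - X) + ip U (v - U) + (ip X X + ip U U) / 2)
  + t ^+ 2 * (ip (a - X) (a - X) + ip (v - U) (v - U)) / 2.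
Proof.
move=> t_ge0 mono; rewrite -subr_ge0.
suff -> : (1 - t) * fitzq a' v' X U
  + t * (ip a v + ip X (a - X) + ip U (v - U) + (ip X X + ip U U) / 2)
  + t ^+ 2 * (ip (a - X) (a - X) + ip (v - U) (v - U)) / 2
  - fitzq a' v' (X + t *: (a - X)) (U + t *: (v - U))
  = t * ip (a - a') (v - v') by exact: mulr_ge0.
by rewrite /fitzq !ipE [ip a X]ipC [ip v U]ipC; field.
Qed.

Section Minty.
Variable B : H -> H -> Prop.
Hypothesis B_max : maxmonotone ip B.

Definition fitzq_ub x u c := forall a v, B a v -> fitzq a v x u <= c.

Let fitzq_vals : set R := [set c | exists x u, fitzq_ub x u c].

Lemma fitzq_ub_ge0 x u c : fitzq_ub x u c -> 0 <= c.
Proof.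
move=> /(fitzq_ge_ip B_max); have := ip_ge0 (x + u).
by rewrite !ipE [ip u x]ipC; lra.
Qed.

Lemma has_inf_fitzq_vals : has_inf fitzq_vals.
Proof.
have [a0 [v0 B0]] := maxmonotone_graph_neq0 B_max.
split; last by exists 0 => c [x [u /fitzq_ub_ge0]].
exists (ip a0 v0 + (ip a0 a0 + ip v0 v0) / 2), a0, v0 => a v Bav.
by have := B_max.1 _ _ _ _ B0 Bav; rewrite /fitzq !ipE; lra.
Qed.

Let m := inf fitzq_vals.

Lemma inf_fitzq_le x u c : fitzq_ub x u c -> m <= c.
Proof. by move=> ub; apply: ge_inf; [exact: has_inf_fitzq_vals.2 | exists x, u]. Qed.

Lemma fitzq_ub_dist x1 u1 c1 x2 u2 c2 : fitzq_ub x1 u1 c1 -> fitzq_ub x2 u2 c2 ->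
  ip (x1 - x2) (x1 - x2) + ip (u1 - u2) (u1 - u2) <= 4 * (c1 + c2 - 2 * m).
Proof.
move=> ub1 ub2; set d := _ + _.
suff : m <= (c1 + c2) / 2 - d / 8 by lra.
apply: (@inf_fitzq_le (2^-1 *: (x1 + x2)) (2^-1 *: (u1 + u2))) => a v Bav.
by rewrite fitzq_midpoint -/d; have := ub1 _ _ Bav; have := ub2 _ _ Bav; lra.
Qed.

Lemma fitzq_inf_attained : exists X U, fitzq_ub X U m.
Proof.
have near_inf n : exists p : H * H, fitzq_ub p.1 p.2 (m + n.+1%:R^-1).
  have inv_gt0 : 0 < n.+1%:R^-1 :> R by rewrite invr_gt0 ltr0n.
  have [c [x [u ub]] c_lt] := inf_adherent inv_gt0 has_inf_fitzq_vals.
  by exists (x, u) => a v Bav; apply: le_trans (ub _ _ Bav) (ltW c_lt).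
have [z zP] := boolp.choice near_inf.
have z_dist k n := fitzq_ub_dist (zP k) (zP n).
have [X zX] : exists X, forall e, 0 < e -> exists M : nat, forall n, (M <= n)%N ->
    ip ((z n).1 - X) ((z n).1 - X) < e.
  apply: (@ip_cauchy_cvg _ 4) => k n /=; have := z_dist k n.
  have := ip_ge0 ((z k).2 - (z n).2).
  by move: (k.+1%:R^-1) (n.+1%:R^-1) => ik in_; lra.
have [U zU] : exists U, forall e, 0 < e -> exists M : nat, forall n, (M <= n)%N ->
    ip ((z n).2 - U) ((z n).2 - U) < e.
  apply: (@ip_cauchy_cvg _ 4) => k n /=; have := z_dist k n.
  have := ip_ge0 ((z k).1 - (z n).1).
  by move: (k.+1%:R^-1) (n.+1%:R^-1) => ik in_; lra.
exists X, U => a v Bav; apply/ler_addgt0Pr => eps eps_gt0.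
have eps3_gt0 : 0 < eps / 3 by rewrite divr_gt0.
have [d1 d1_gt0 small1] := ipl_small (v + X) eps3_gt0.
have [d2 d2_gt0 small2] := ipl_small (a + U) eps3_gt0.
have [M1 M1P] := zX _ d1_gt0.
have [M2 M2P] := zU _ d2_gt0.
have [M3 M3P] := invSn_lt eps3_gt0.
pose n := maxn M1 (maxn M2 M3).
have sqrBC (x y : H) : ip (x - y) (x - y) = ip (y - x) (y - x).
  by rewrite -opprB ipNl ipNr opprK.
have close1 := small1 (X - (z n).1) ltac:(by rewrite sqrBC M1P //; lia).
have close2 := small2 (U - (z n).2) ltac:(by rewrite sqrBC M2P //; lia).
have inv_small := M3P n ltac:(lia).
have := fitzq_shift a v X U (z n).1 (z n).2.
have := zP n a v Bav.
by move: close1 close2 inv_small; move: (n.+1%:R^-1) => i; lra.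
Qed.

Lemma fitzq_argmin_variational X U a v : fitzq_ub X U m -> B a v ->
  m <= ip a v + ip X (a - X) + ip U (v - U) + (ip X X + ip U U) / 2.
Proof.
move=> ubXU Bav; rewrite -subr_ge0.
set K := _ - m; set D := ip (a - X) (a - X) + ip (v - U) (v - U).
apply: (@ge0_of_ge_small _ _ (D / 2)).
  by have := ip_ge0 (a - X); have := ip_ge0 (v - U); rewrite /D; lra.
move=> t t_gt0 t_lt1.
have : m <= (1 - t) * m + t * (K + m) + t ^+ 2 * D / 2.
  apply: (@inf_fitzq_le (X + t *: (a - X)) (U + t *: (v - U))) => a' v' Ba'v'.
  apply: le_trans (fitzq_segment X U (ltW t_gt0) (B_max.1 _ _ _ _ Bav Ba'v')) _.
  rewrite /K subrK lerD2r lerD2r ler_wpM2l ?ubXU //; lra.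
have -> : (1 - t) * m + t * (K + m) + t ^+ 2 * D / 2 = m + t * (K + t * (D / 2)).
  by field.
by rewrite lerDl pmulr_rge0 //; lra.
Qed.

Lemma maxmonotone_opp_point : exists x, B x (- x).
Proof.
have [X [U ubXU]] := fitzq_inf_attained.
have XU_le := fitzq_ge_ip B_max ubXU.
have var := fitzq_argmin_variational ubXU.
have B_UX : B (- U) (- X).
  apply: maxmonotone_related => // a v Bav; have := var a v Bav.
  have := ip_ge0 (X + U); move: XU_le.
  by rewrite !ipE [ip U X]ipC [ip a X]ipC; lra.
have XU0 : X + U = 0.
  apply: ip_eq0; apply/eqP; rewrite eq_le ip_ge0 andbT.
  by move: (var _ _ B_UX) XU_le; rewrite !ipE [ip U X]ipC; lra.
have U_opp : U = - X by apply/eqP; rewrite -addr_eq0 addrC XU0.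
by exists X; move: B_UX; rewrite U_opp opprK.
Qed.

End Minty.

Lemma maxmonotone_shift_scale A g w : maxmonotone ip A -> 0 < g ->
  maxmonotone ip (fun y s => A (y + w) (g^-1 *: s)).
Proof.
move=> [A_mono A_max] g_gt0; have g_neq0 : g != 0 by rewrite gt_eqF.
have shiftB (y1 y2 : H) : (y1 + w) - (y2 + w) = y1 - y2.
  by rewrite opprD addrACA subrr addr0.
split=> [y1 y2 s1 s2 A1 A2|C C_mono AC y s Cys].
  by have := A_mono _ _ _ _ A1 A2; rewrite shiftB -scalerBr ipZr pmulr_rge0 ?invr_gt0.
pose C' p u := C (p - w) (g *: u).
have C'_mono : monotone_op ip C'.
  move=> p1 p2 u1 u2 C1 C2; have := C_mono _ _ _ _ C1 C2.
  by rewrite -shiftB !subrK -scalerBr ipZr pmulr_rge0.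
have := A_max C' C'_mono _ (y + w) (g^-1 *: s).
rewrite /C' addrK scalerA mulfV // scale1r; apply => // p u Apu.
by apply: AC; rewrite subrK scalerA mulVf // scale1r.
Qed.

Lemma maxmonotone_resolvent_ex A g w : maxmonotone ip A -> 0 < g ->
  exists p u, A p u /\ w = p + g *: u.
Proof.
move=> A_max g_gt0.
have [y Ay] := maxmonotone_opp_point (maxmonotone_shift_scale w A_max g_gt0).
exists (y + w), (g^-1 *: - y); split => //.
by rewrite scalerA mulfV ?gt_eqF // scale1r addrC addKr.
Qed.

Lemma resolventP A g w : maxmonotone ip A -> 0 < g ->
  exists u, A (resolvent g A w) u /\ w = resolvent g A w + g *: u.
Proof.
move=> A_max g_gt0; apply: (epsilon_spec (inhabits 0) (fun p => exists u, A p u /\ w = p + g *: u)).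
by have [p [u ?]] := maxmonotone_resolvent_ex w A_max g_gt0; exists p, u.
Qed.

Lemma resolvent_ip_le A g w a u0 : maxmonotone ip A -> 0 < g -> A a u0 ->
  ip (resolvent g A w) (resolvent g A w)
    <= 4 * ip w w + 10 * ip a a + 8 * (g ^+ 2 * ip u0 u0).
Proof.
move=> A_max g_gt0 Aau0; have [u [Apu w_def]] := resolventP w A_max g_gt0.
set p := resolvent g A w in Apu w_def *.
have mono : 0 <= ip (p - a) ((w - a - g *: u0) - (p - a)).
  have -> : (w - a - g *: u0) - (p - a) = g *: (u - u0).
    rewrite w_def scalerBr opprB [p + _]addrC -!addrA; congr (_ + _).
    by rewrite [- a + _]addrCA addKr addrCA subrr addr0.
  by rewrite ipZr; apply: mulr_ge0; [exact: ltW | exact: A_max.1 _ _ _ _ Apu Aau0].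
(* [a] is the resolvent at [a + g u0]: this is nonexpansiveness of the resolvent. *)
have pa_le : ip (p - a) (p - a) <= ip (w - a - g *: u0) (w - a - g *: u0).
  move: mono; move: (p - a) (w - a - g *: u0) => q r qr.
  by have := ip_ge0 (q - r); move: qr; rewrite !ipE [ip r q]ipC; lra.
have := ip_addr_le (p - a) a; rewrite subrK.
have := ip_subr_le w (a + g *: u0); rewrite opprD addrA.
have := ip_addr_le a (g *: u0); rewrite ipZl ipZr.
by rewrite expr2 -mulrA; lra.
Qed.

Lemma pnorm_sqr n (y : 'I_n -> H) : pnorm ip y ^+ 2 = \sum_(j < n) ip (y j) (y j).
Proof. by rewrite /pnorm sqr_sqrtr // sumr_ge0 // => j _; exact: ip_ge0. Qed.

Lemma pnormZ n c (y : 'I_n -> H) : pnorm ip (fun j => c *: y j) = `|c| * pnorm ip y.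
Proof.
rewrite /pnorm -sqrtr_sqr -sqrtrM ?sqr_ge0 // mulr_sumr.
by congr Num.sqrt; apply: eq_bigr => j _; rewrite ipZl ipZr mulrA -expr2.
Qed.

Lemma pnorm_subr_le n (y : 'I_n -> H) p :
  pnorm ip (fun j => y j - p) <= Num.sqrt (2 * pnorm ip y ^+ 2 + 2 * n%:R * ip p p).
Proof.
rewrite {1}/pnorm ler_wsqrtr // pnorm_sqr.
apply: le_trans (ler_sum _ (fun j _ => ip_subr_le (y j) p)) _.
by rewrite big_split /= -mulr_sumr sumr_const card_ord -mulr_natl; lra.
Qed.

Lemma ip_xs_le N (x : 'I_N.-1 -> H) i : ip (xs x i) (xs x i) <= pnorm ip x ^+ 2.
Proof.
rewrite pnorm_sqr; have ip_sum_ge0 (P : pred 'I_N.-1) :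
  0 <= \sum_(j | P j) ip (x j) (x j) by apply: sumr_ge0 => j _; exact: ip_ge0.
case: i => [|k] /=; first by rewrite ip0l.
case: (insub k) => [j|]; last by rewrite ip0l.
by rewrite (bigD1 j) //= lerDl.
Qed.

End InnerProduct.

Lemma scale_affine_subl (R : pzRingType) (V : lmodType R) (t : R) (y p : V) :
  t *: y + (1 - t) *: p - y = (t - 1) *: (y - p).
Proof. by rewrite scalerBr !scalerBl !scale1r opprB addrAC. Qed.

Lemma reloc_subE (R : realType) (H : lmodType R) N As (d g : R)
    (x : 'I_N.-1 -> H) j : g != 0 ->
  reloc As d g x j - reloc As g g x j = (d / g - 1) *: (x j - J As g 1 (xs x 1)).
Proof.
move=> g_neq0; rewrite /reloc (mulfV g_neq0) subrr scale0r addr0 !scale1r.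
case: ifP => [/eqP j0|_]; last by rewrite addrA -scalerDr !subrK scale_affine_subl.
have -> : xs x 1 = x j.
  rewrite /xs; case: insubP => [i _ i0|]; first by congr x; apply: val_inj; rewrite i0.
  by rewrite -j0 ltn_ord.
exact: scale_affine_subl.
Qed.

Lemma pnorm_reloc_sub (R : realType) (H : lmodType R) (ip : H -> H -> R) :
  isHilbert ip -> forall N As (d g : R) (x : 'I_N.-1 -> H), 0 < g ->
  pnorm ip (fun j => reloc As d g x j - reloc As g g x j)
    = `|d - g| / g * pnorm ip (fun j => x j - J As g 1 (xs x 1)).
Proof.
move=> hH N As d g x g_gt0; have g_neq0 : g != 0 by rewrite gt_eqF.
rewrite (_ : (fun j => _) = (fun j => (d / g - 1) *: (x j - J As g 1 (xs x 1)))).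
  have -> : d / g - 1 = (d - g) / g by field.
  by rewrite (pnormZ hH) normrM normfV (gtr0_norm g_gt0).
by apply/funext => j; rewrite reloc_subE.
Qed.

Theorem lemma5p1 (R : realType) (H : lmodType R) (ip : H -> H -> R)
  (hH : isHilbert ip) (N : nat) (hN : (2 <= N)%N)
  (As : nat -> H -> H -> Prop)
  (hA : forall i, (1 <= i <= N)%N -> maxmonotone ip (As i))
  (theta : R) (htheta : 0 < theta < 1)
  (Gam : set R) (hG0 : Gam !=set0) (hGpos : forall g, Gam g -> 0 < g)
  (hGcl : closed Gam)
  (hGint : forall a b c, Gam a -> Gam c -> a <= b -> b <= c -> Gam b)
  (S : set (('I_N.-1 -> H) * R)) (hS0 : S !=set0)
  (hSb : exists M : R, forall x g, S (x, g) ->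
           Num.sqrt (pnorm ip x ^+ 2 + g ^+ 2) <= M)
  (hSfix : forall x g, S (x, g) -> Gam g /\ MT_T As theta g x = x) :
  exists L : R, 0 <= L /\
    forall d, Gam d -> forall x g, S (x, g) ->
      pnorm ip (fun j => reloc As d g x j - reloc As g g x j)
        <= L * `|d - g|.
Proof.
have A1_max : maxmonotone ip (As 1) by apply: hA; rewrite leqnn ltnW.
have [a [u0 Aau0]] := maxmonotone_graph_neq0 hH A1_max.
have [e e_gt0 e_le] := closed_pos_lbound hGpos hGcl.
have [M SM] := hSb.
pose P := 4 * M ^+ 2 + 10 * ip a a + 8 * (M ^+ 2 * ip u0 u0).
pose K := 2 * M ^+ 2 + 2 * N.-1%:R * P.
exists (Num.sqrt K / e); split=> [|d Gd x g Sxg]; first by rewrite divr_ge0 ?sqrtr_ge0 ?ltW.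
have [Gg _] := hSfix _ _ Sxg; have g_gt0 := hGpos _ Gg.
have xg_le : pnorm ip x ^+ 2 + g ^+ 2 <= M ^+ 2.
  by apply: sqrtr_le_sqr (SM _ _ Sxg); rewrite addr_ge0 ?sqr_ge0.
set p := J As g 1 (xs x 1).
have p_le : ip p p <= P.
  apply: le_trans (resolvent_ip_le hH _ A1_max g_gt0 Aau0) _.
  have g2_le : g ^+ 2 <= M ^+ 2 by have := sqr_ge0 (pnorm ip x); lra.
  have := ler_wpM2r (ip_ge0 hH u0) g2_le; have := ip_xs_le hH x 1.
  by have := sqr_ge0 g; rewrite /P; lra.
rewrite (pnorm_reloc_sub hH) // mulrAC [X in _ <= X]mulrC -mulrA.
apply: ler_wpM2l; first exact: normr_ge0.
apply: ler_pM.
- exact: sqrtr_ge0.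
- by rewrite invr_ge0 ltW.
- apply: le_trans (pnorm_subr_le hH x p) _; rewrite ler_wsqrtr // /K.
  by have := ler_wpM2l (ler0n _ N.-1) p_le; have := sqr_ge0 g; lra.
- by rewrite lef_pV2 ?posrE // e_le.
Qed.
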